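(* Let $n,d,d_k$ be positive integers, $X\in\mathbb{R}^{n\times d}$, $W_Q,W_K\in\mathbb{R}^{d\times d_k}$, $E\in\mathbb{R}^{n\times n}$, and let $P\in\mathbb{R}^{d\times d}$ be an orthogonal projector ($P=P^\top=P^2$). Put $B=W_QW_K^\top$, $X_P=XP$, $$G_Q=\frac{X^\top E X W_K}{\sqrt{d_k}},\qquad G_K=\frac{X^\top E^\top X W_Q}{\sqrt{d_k}}.$$ For real step sizes $\eta_Q,\eta_K\ge 0$ let $W_Q^+=W_Q-\eta_QG_Q$, $W_K^+=W_K-\eta_KG_K$, $B^+=W_Q^+(W_K^+)^\top$, and $$\Delta Z_P=\frac{X_P\,P(B^+-B)P\,X_P^\top}{\sqrt{d_k}}.$$ Then $$\|\Delta Z_P\|_F\le \frac{\|X_P\|_{\mathrm{op}}^2\|X_P\|_F\|E\|_{\mathrm{op}}}{d_k}\Big(\eta_Q\|XW_KW_K^\top P\|_F+\eta_K\|XW_QW_Q^\top P\|_F\Big)+R_2,$$ where $$R_2=\frac{\eta_Q\eta_K\|X_P\|_{\mathrm{op}}^2\|X_P\|_F^2\|E\|_{\mathrm{op}}^2\|XW_K\|_F\|XW_Q\|_F}{d_k^{3/2}}.$$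
   Context: $\|\cdot\|_F$ denotes the Frobenius norm and $\|\cdot\|_{\mathrm{op}}$ the spectral (operator) norm. Interpretation: $X$ is the normalized residual stream entering an attention head with logits $Z=XBX^\top/\sqrt{d_k}$, $P$ projects onto ''immature'' residual directions, $E$ plays the role of $\partial\mathcal{L}/\partial Z$, and $G_Q,G_K$ are then the gradients of the loss with respect to $W_Q,W_K$; $\Delta Z_P$ is the change of the immature-to-immature logit component $Z_P=X_P PBP X_P^\top/\sqrt{d_k}$ after one gradient step. *)

From HB Require Import structures.
From mathcomp Require Import all_boot all_order all_algebra.
From mathcomp Require Import boolp classical_sets reals.
Set Implicit Arguments. Unset Strict Implicit. Unset Printing Implicit Defensive.
Import Order.TTheory GRing.Theory Num.Theory.
Local Open Scope ring_scope.
Local Open Scope classical_set_scope.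

Definition frob (R : realType) (m n : nat) (A : 'M[R]_(m, n)) : R :=
  Num.sqrt (\sum_(i < m) \sum_(j < n) A i j ^+ 2).

Definition vnorm (R : realType) (n : nat) (v : 'cV[R]_n) : R :=
  Num.sqrt (\sum_(i < n) v i 0 ^+ 2).

Definition opnorm (R : realType) (m n : nat) (A : 'M[R]_(m, n)) : R :=
  sup [set vnorm (A *m v) | v in [set v : 'cV[R]_n | vnorm v <= 1]].

From HB Require Import structures.
From mathcomp Require Import all_boot all_order all_algebra.
From mathcomp Require Import boolp classical_sets reals.
From mathcomp Require Import lra ring.
Import Order.TTheory GRing.Theory Num.Theory.
Set Implicit Arguments. Unset Strict Implicit. Unset Printing Implicit Defensive.
Local Open Scope ring_scope.

(* Since P is a symmetric idempotent, X_P P = X_P and X_P X^T = X_P X_P^T, so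
   the sandwiched update X_P P (B^+ - B) P X_P^T is a sum of two terms linear
   in the step sizes and one bilinear term, each a product of five matrices
   in which X_P or E appears in operator-norm position. Each is then bounded by
   ||A B||_F <= ||A||_op ||B||_F and ||A B||_F <= ||A||_F ||B||_F, which reduce
   to the Cauchy-Schwarz inequality for finite sums. *)

Section SumsOfSquares.
Variables (R : realFieldType) (I : finType).
Implicit Types f g : I -> R.

Lemma sumr_sqr_ge0 f : 0 <= \sum_i f i ^+ 2.
Proof. by apply: sumr_ge0 => i _; exact: sqr_ge0. Qed.

Lemma cauchy_schwarz_sum f g :
  (\sum_i f i * g i) ^+ 2 <= (\sum_i f i ^+ 2) * (\sum_i g i ^+ 2).
Proof.
set A := \sum_i f i ^+ 2; set B := \sum_i g i ^+ 2; set C := \sum_i f i * g i.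
have B_ge0 : 0 <= B by exact: sumr_sqr_ge0.
have [B_gt0|B_le0] := ltrP 0 B.
  have : 0 <= B * (A * B - C ^+ 2).
    have -> : B * (A * B - C ^+ 2) = \sum_i (f i * B - g i * C) ^+ 2.
      rewrite (eq_bigr (fun i => B ^+ 2 * f i ^+ 2 - 2 * B * C * (f i * g i)
                                 + C ^+ 2 * g i ^+ 2)); last by move=> i _; ring.
      by rewrite big_split sumrB /= -!mulr_sumr -/A -/B -/C; ring.
    exact: sumr_sqr_ge0.
  by rewrite pmulr_rge0 // subr_ge0.
have B0 : B = 0 by apply/eqP; rewrite eq_le B_le0 B_ge0.
have g0 i : g i = 0.
  apply/eqP; rewrite -sqrf_eq0; apply/eqP.
  by apply: (psumr_eq0P _ B0) => // j _; exact: sqr_ge0.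
by rewrite B0 mulr0 /C big1 ?expr0n // => i _; rewrite g0 mulr0.
Qed.

End SumsOfSquares.

Section EuclideanNorm.
Variables (R : rcfType) (I : finType).
Implicit Types f g : I -> R.

Lemma sum_mul_le_sqrt f g :
  \sum_i f i * g i <= Num.sqrt (\sum_i f i ^+ 2) * Num.sqrt (\sum_i g i ^+ 2).
Proof.
rewrite -sqrtrM ?sumr_sqr_ge0 //.
rewrite (le_trans (ler_norm _)) // -sqrtr_sqr ler_sqrt ?cauchy_schwarz_sum //.
by rewrite mulr_ge0 ?sumr_sqr_ge0.
Qed.

Lemma sqrt_sumr_sqrD_le f g :
  Num.sqrt (\sum_i (f i + g i) ^+ 2) <=
  Num.sqrt (\sum_i f i ^+ 2) + Num.sqrt (\sum_i g i ^+ 2).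
Proof.
set a := Num.sqrt (\sum_i f i ^+ 2); set b := Num.sqrt (\sum_i g i ^+ 2).
have ab_ge0 : 0 <= a + b by rewrite addr_ge0 ?sqrtr_ge0.
rewrite -(ger0_norm ab_ge0) -sqrtr_sqr ler_sqrt ?sqr_ge0 //.
have -> : \sum_i (f i + g i) ^+ 2
          = \sum_i f i ^+ 2 + 2 * \sum_i f i * g i + \sum_i g i ^+ 2.
  by rewrite mulr_sumr -!big_split /=; apply: eq_bigr => i _; ring.
have := sum_mul_le_sqrt f g.
rewrite -/a -/b -(sqr_sqrtr (sumr_sqr_ge0 f)) -(sqr_sqrtr (sumr_sqr_ge0 g)) -/a -/b.
nra.
Qed.

End EuclideanNorm.

Section Frobenius.
Variable R : realType.
Implicit Types (m n p : nat).

Lemma frob_ge0 m n (A : 'M[R]_(m, n)) : 0 <= frob A.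
Proof. exact: sqrtr_ge0. Qed.

Lemma frob_pair m n (A : 'M[R]_(m, n)) :
  frob A = Num.sqrt (\sum_(ij : 'I_m * 'I_n) A ij.1 ij.2 ^+ 2).
Proof. by rewrite /frob pair_bigA. Qed.

Lemma ler_frobD m n (A B : 'M[R]_(m, n)) : frob (A + B) <= frob A + frob B.
Proof.
rewrite !frob_pair; under eq_bigr do rewrite mxE.
exact: (sqrt_sumr_sqrD_le (fun ij : 'I_m * 'I_n => A ij.1 ij.2) (fun ij => B ij.1 ij.2)).
Qed.

Lemma frobZ m n (c : R) (A : 'M[R]_(m, n)) : frob (c *: A) = `|c| * frob A.
Proof.
rewrite !frob_pair; under eq_bigr do rewrite mxE exprMn.
by rewrite -mulr_sumr sqrtrM ?sqr_ge0 // sqrtr_sqr.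
Qed.

Lemma frobN m n (A : 'M[R]_(m, n)) : frob (- A) = frob A.
Proof. by rewrite -scaleN1r frobZ normrN normr1 mul1r. Qed.

Lemma frob_tr m n (A : 'M[R]_(m, n)) : frob A^T = frob A.
Proof.
rewrite /frob exchange_big; congr Num.sqrt.
by apply: eq_bigr => i _; apply: eq_bigr => j _; rewrite mxE.
Qed.

Lemma vnorm_frob n (v : 'cV[R]_n) : vnorm v = frob v.
Proof. by rewrite /frob /vnorm; under [in RHS]eq_bigr do rewrite big_ord1. Qed.

Lemma frob_col m n (A : 'M[R]_(m, n)) :
  frob A = Num.sqrt (\sum_j vnorm (col j A) ^+ 2).
Proof.
rewrite /frob exchange_big; congr Num.sqrt; apply: eq_bigr => j _.
by rewrite sqr_sqrtr ?sumr_sqr_ge0 //; apply: eq_bigr => i _; rewrite mxE.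
Qed.

Lemma vnorm_mulmx_le_frob m n (A : 'M[R]_(m, n)) (v : 'cV[R]_n) :
  vnorm (A *m v) <= frob A * vnorm v.
Proof.
have A_ge0 : 0 <= \sum_i \sum_j A i j ^+ 2.
  by apply: sumr_ge0 => i _; exact: sumr_sqr_ge0.
rewrite /frob /vnorm -sqrtrM // ler_sqrt; last by rewrite mulr_ge0 ?sumr_sqr_ge0.
rewrite mulr_suml; apply: ler_sum => i _; rewrite mxE.
exact: (cauchy_schwarz_sum (fun j => A i j) (fun j => v j 0)).
Qed.

Lemma ler_frobB m n (A B : 'M[R]_(m, n)) : frob (A - B) <= frob A + frob B.
Proof. by rewrite -(frobN B) ler_frobD. Qed.

End Frobenius.

Section OperatorNorm.
Variable R : realType.
Implicit Types (m n p : nat).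

Lemma vnorm0 n : vnorm (0 : 'cV[R]_n) = 0.
Proof. by rewrite /vnorm big1 ?sqrtr0 // => i _; rewrite mxE expr0n. Qed.

Lemma vnormZ n (c : R) (v : 'cV[R]_n) : vnorm (c *: v) = `|c| * vnorm v.
Proof. by rewrite !vnorm_frob frobZ. Qed.

Let image_unit_ball m n (A : 'M[R]_(m, n)) :=
  [set vnorm (A *m v) | v in [set v : 'cV[R]_n | vnorm v <= 1]]%classic.

Let has_sup_image_unit_ball m n (A : 'M[R]_(m, n)) : has_sup (image_unit_ball A).
Proof.
split; first by exists (vnorm (A *m 0)), 0 => //=; rewrite vnorm0.
exists (frob A) => _ [v /= v_le1 <-].
by rewrite (le_trans (vnorm_mulmx_le_frob A v)) // ler_piMr ?frob_ge0.
Qed.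

Lemma opnorm_ge0 m n (A : 'M[R]_(m, n)) : 0 <= opnorm A.
Proof.
apply: (sup_upper_bound (has_sup_image_unit_ball A)).
by exists 0; rewrite /= ?mulmx0 vnorm0.
Qed.

Lemma opnorm_le_frob m n (A : 'M[R]_(m, n)) : opnorm A <= frob A.
Proof.
apply: ge_sup; first by case: (has_sup_image_unit_ball A).
move=> _ [v /= v_le1 <-].
by rewrite (le_trans (vnorm_mulmx_le_frob A v)) // ler_piMr ?frob_ge0.
Qed.

Lemma vnorm_mulmx_le m n (A : 'M[R]_(m, n)) (v : 'cV[R]_n) :
  vnorm (A *m v) <= opnorm A * vnorm v.
Proof.
have [v_gt0|v_le0] := ltrP 0 (vnorm v); last first.
  have v0 : vnorm v = 0 by apply/eqP; rewrite eq_le v_le0 sqrtr_ge0.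
  by rewrite (le_trans (vnorm_mulmx_le_frob A v)) // v0 !mulr0.
set w := (vnorm v)^-1 *: v.
have w_le1 : vnorm w <= 1.
  by rewrite vnormZ ger0_norm ?mulVf ?gt_eqF // invr_ge0 ltW.
have := sup_upper_bound (has_sup_image_unit_ball A) (ex_intro2 _ _ w w_le1 erefl).
rewrite -scalemxAr vnormZ ger0_norm ?invr_ge0 ?(ltW v_gt0) //.
by rewrite ler_pdivrMl // mulrC.
Qed.

Lemma frob_mulmx_le_opnorm m n p (A : 'M[R]_(m, n)) (B : 'M[R]_(n, p)) :
  frob (A *m B) <= opnorm A * frob B.
Proof.
rewrite !frob_col -(ger0_norm (opnorm_ge0 A)) -sqrtr_sqr -sqrtrM ?sqr_ge0 //.
rewrite ler_sqrt; last by rewrite mulr_ge0 ?sqr_ge0 ?sumr_ge0 // => j _; rewrite sqr_ge0.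
rewrite mulr_sumr; apply: ler_sum => j _.
rewrite colE -mulmxA -colE -exprMn ler_pXn2r ?nnegrE ?mulr_ge0 ?opnorm_ge0 ?sqrtr_ge0 //.
exact: vnorm_mulmx_le.
Qed.

Lemma frob_mulmx_le m n p (A : 'M[R]_(m, n)) (B : 'M[R]_(n, p)) :
  frob (A *m B) <= frob A * frob B.
Proof.
by rewrite (le_trans (frob_mulmx_le_opnorm A B)) // ler_wpM2r ?frob_ge0 ?opnorm_le_frob.
Qed.

Lemma frob_mulmx_tr_le_opnorm m n p (A : 'M[R]_(m, n)) (B : 'M[R]_(p, n)) :
  frob (A *m B^T) <= frob A * opnorm B.
Proof. by rewrite -frob_tr trmx_mul trmxK mulrC -(frob_tr A) frob_mulmx_le_opnorm. Qed.

Lemma frob_mulmx4_le m1 m2 m3 m4 m5 (A : 'M[R]_(m1, m2)) (B : 'M[R]_(m2, m3))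
    (C : 'M[R]_(m3, m4)) (D : 'M[R]_(m4, m5)) :
  frob (A *m B *m C *m D) <= opnorm A * frob B * opnorm C * frob D.
Proof.
rewrite -!mulmxA -[_ * frob D]mulrA -[_ * (_ * _)]mulrA.
apply: (le_trans (frob_mulmx_le_opnorm _ _)); rewrite ler_wpM2l ?opnorm_ge0 //.
apply: (le_trans (frob_mulmx_le _ _)); rewrite ler_wpM2l ?frob_ge0 //.
exact: frob_mulmx_le_opnorm.
Qed.

Lemma frob_gram_le m n (A : 'M[R]_(m, n)) : frob (A *m A^T) <= opnorm A * frob A.
Proof. by rewrite -[frob A]frob_tr frob_mulmx_le_opnorm. Qed.

Section SandwichedProducts.
Variables (m n : nat) (A : 'M[R]_(m, n)) (C : 'M[R]_m).

Let nonneg := (opnorm_ge0, frob_ge0, mulr_ge0).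

Lemma frob_gram_mulmx_le (M : 'M[R]_(m, n)) :
  frob (A *m A^T *m C *m (M *m A^T)) <= opnorm A ^+ 2 * frob A * opnorm C * frob M.
Proof.
rewrite (le_trans (frob_mulmx4_le _ _ _ _)) // frob_tr.
have -> : opnorm A ^+ 2 * frob A * opnorm C * frob M
          = opnorm A * frob A * opnorm C * (frob M * opnorm A) by ring.
by rewrite ler_wpM2l ?nonneg ?frob_mulmx_tr_le_opnorm.
Qed.

Lemma frob_mulmx_gram_le (M : 'M[R]_(m, n)) :
  frob (A *m M^T *m C *m (A *m A^T)) <= opnorm A ^+ 2 * frob A * opnorm C * frob M.
Proof.
rewrite (le_trans (frob_mulmx4_le _ _ _ _)) // frob_tr.
have -> : opnorm A ^+ 2 * frob A * opnorm C * frob M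
          = opnorm A * frob M * opnorm C * (opnorm A * frob A) by ring.
by rewrite ler_wpM2l ?nonneg ?frob_gram_le.
Qed.

Lemma frob_gram_mulmx_gram_le k (F G : 'M[R]_(m, k)) :
  frob (A *m A^T *m C *m (F *m G^T *m C *m (A *m A^T)))
  <= opnorm A ^+ 2 * frob A ^+ 2 * opnorm C ^+ 2 * frob F * frob G.
Proof.
have inner : frob (F *m G^T *m C *m (A *m A^T))
              <= frob F * frob G * opnorm C * (opnorm A * frob A).
  rewrite (le_trans (frob_mulmx4_le _ _ _ _)) // frob_tr.
  rewrite ler_pM ?nonneg ?frob_gram_le //.
  by rewrite !ler_wpM2r ?nonneg ?opnorm_le_frob.
rewrite (le_trans (frob_mulmx4_le _ _ _ _)) // frob_tr.
have -> : opnorm A ^+ 2 * frob A ^+ 2 * opnorm C ^+ 2 * frob F * frob G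
          = opnorm A * frob A * opnorm C * (frob F * frob G * opnorm C * (opnorm A * frob A)).
  by ring.
by rewrite ler_wpM2l ?nonneg ?inner.
Qed.

End SandwichedProducts.

End OperatorNorm.

Lemma mulmx_subZ_trmx (R : comRingType) d k (a b : R) (W V G H : 'M[R]_(d, k)) :
  (W - a *: G) *m (V - b *: H)^T - W *m V^T
  = (a * b) *: (G *m H^T) - a *: (G *m V^T) - b *: (W *m H^T).
Proof.
rewrite [(V - _)^T]linearB /= [(b *: H)^T]linearZ /= mulmxBl !mulmxBr.
rewrite -!scalemxAl -!scalemxAr scalerA.
by rewrite addrAC (addrAC (W *m V^T)) subrr add0r opprB addrC.
Qed.

Section ProjectedUpdate.
Variables (R : comRingType) (n d k : nat).
Variables (X : 'M[R]_(n, d)) (WQ WK : 'M[R]_(d, k)) (E : 'M[R]_n) (P : 'M[R]_d).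
Hypotheses (P_sym : P^T = P) (P_idem : P *m P = P).

Let mulmxPP m (A : 'M[R]_(m, d)) : A *m P *m P = A *m P.
Proof. by rewrite -mulmxA P_idem. Qed.

Local Notation XP := (X *m P).

Lemma proj_update_expansion (u a b : R) :
  u *: (XP *m (P *m ((WQ - a *: (u *: (X^T *m E *m X *m WK)))
                    *m (WK - b *: (u *: (X^T *m E^T *m X *m WQ)))^T
                    - WQ *m WK^T) *m P) *m XP^T) =
    (a * b * u ^+ 3) *: (XP *m XP^T *m E *m (X *m WK *m (X *m WQ)^T *m E *m (XP *m XP^T)))
    - (a * u ^+ 2) *: (XP *m XP^T *m E *m (X *m WK *m WK^T *m P *m XP^T))
    - (b * u ^+ 2) *: (XP *m (X *m WQ *m WQ^T *m P)^T *m E *m (XP *m XP^T)).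
Proof.
have sandwich (D : 'M[R]_d) : XP *m (P *m D *m P) *m XP^T = XP *m D *m XP^T.
  by rewrite trmx_mul P_sym !mulmxA !mulmxPP.
rewrite sandwich mulmx_subZ_trmx [(u *: _)^T]linearZ /=.
rewrite !mulmxBr !mulmxBl -!scalemxAl -!scalemxAr !scalerBr !scalerA.
rewrite !trmx_mul !trmxK P_sym !mulmxA !mulmxPP -!scalemxAl !scalerA.
by congr (_ - _ - _); congr (_ *: _); ring.
Qed.

End ProjectedUpdate.

Theorem theorem1 (R : realType) (n d dk : nat)
  (hn : (0 < n)%N) (hd : (0 < d)%N) (hdk : (0 < dk)%N)
  (X : 'M[R]_(n, d)) (WQ WK : 'M[R]_(d, dk)) (E : 'M[R]_n) (P : 'M[R]_d)
  (hPsym : P^T = P) (hPidem : P *m P = P)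
  (etaQ etaK : R) (hetaQ : 0 <= etaQ) (hetaK : 0 <= etaK) :
  let sdk := Num.sqrt (dk%:R : R) in
  let B := WQ *m WK^T in
  let XP := X *m P in
  let GQ := sdk^-1 *: (X^T *m E *m X *m WK) in
  let GK := sdk^-1 *: (X^T *m E^T *m X *m WQ) in
  let WQp := WQ - etaQ *: GQ in
  let WKp := WK - etaK *: GK in
  let Bp := WQp *m WKp^T in
  let dZP := sdk^-1 *: (XP *m (P *m (Bp - B) *m P) *m XP^T) in
  let R2 := etaQ * etaK * opnorm XP ^+ 2 * frob XP ^+ 2 * opnorm E ^+ 2
            * frob (X *m WK) * frob (X *m WQ) / (dk%:R * sdk) in
  frob dZP <=
    opnorm XP ^+ 2 * frob XP * opnorm E / dk%:R
      * (etaQ * frob (X *m WK *m WK^T *m P) + etaK * frob (X *m WQ *m WQ^T *m P))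
    + R2.
Proof.
cbv zeta; rewrite proj_update_expansion //.
set sdk := Num.sqrt _; set XP := X *m P.
have sdk_gt0 : 0 < sdk by rewrite sqrtr_gt0 ltr0n.
have sdk_sqr : sdk ^+ 2 = dk%:R by rewrite sqr_sqrtr ?ler0n.
have coef_ge0 := (mulr_ge0, exprn_ge0, invr_ge0, ltW sdk_gt0).
rewrite (le_trans (ler_frobB _ _)) // (le_trans (lerD (ler_frobB _ _) (lexx _))) //.
rewrite !frobZ !ger0_norm ?coef_ge0 //.
apply: (le_trans (lerD (lerD (ler_wpM2l _ (frob_gram_mulmx_gram_le _ _ _ _))
                             (ler_wpM2l _ (frob_gram_mulmx_le _ _ _)))
                       (ler_wpM2l _ (frob_mulmx_gram_le _ _ _)))); rewrite ?coef_ge0 //.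
rewrite le_eqVlt; apply/predU1l.
by rewrite -sdk_sqr; field; rewrite gt_eqF.
Qed.
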